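(* Let $H_m,H_{el}$ be finite groups with an action $(h,g)\mapsto h\cdot g$ of $H_{el}$ on $H_m$ satisfying $h\cdot(gg')=(h\cdot g)(h\cdot g')$, and let $\mathcal{A}=F(H_m)\times\mathbb{C}H_{el}$ be the modified quantum double, with elements written as functions in $F(H_m\times H_{el})$. Let $A\subset H_m$ be an $H_{el}$-orbit with preferred element $g_A$, $N_A=\{h\in H_{el}:h\cdot g_A=g_A\}$, and $\Pi^A_1$ the magnetic irreducible representation (trivial representation of $N_A$). Let $E\subseteq A$ and consider the condensate $|\phi_r\rangle=\sum_{g_i\in E}|g_i\rangle$, which as a function on $H_{el}$ is $|\phi_r(x)\rangle=1_{V_E}(x)$ with $V_E=\{x\in H_{el}:x\cdot g_A\in E\}$. Let $M_E=\{m\in H_{el}: mV_E=V_E\}=\{m\in H_{el}:\{m\cdot g_i\}_{g_i\in E}=E\}$ and let $K$ be the smallest subgroup of $H_m$ containing $E$. Then $\mathcal{T}_r:=\{a\in\mathcal{A}:(\mathrm{id}\otimes\Pi^A_1)\Delta(a)(1\otimes|\phi_r\rangle)=a\otimes|\phi_r\rangle\}$ equals $F(H_m/K)\otimes\mathbb{C}M_E$; that is, $f\in\mathcal{T}_r$ if and only if $f(x_1,y_1)=0$ whenever $y_1\notin M_E$, and $f(x_1k,y_1)=f(x_1,y_1)$ for all $x_1\in H_m$, $y_1\in H_{el}$, $k\in K$.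
   Context: Modified quantum double: vector space $F(H_m)\otimes\mathbb{C}H_{el}$ with basis $P_gh$, identified with $F(H_m\times H_{el})$ via $P_gh\leftrightarrow\delta_g\otimes\delta_h$; $P_ghP_{g'}h'=\delta_{g,h\cdot g'}P_ghh'$, $\Delta(P_gh)=\sum_{g'\in H_m}P_{g'}h\otimes P_{g'^{-1}g}h$ (in function notation $\Delta(f)(x_1,y_1;x_2,y_2)=f(x_1x_2,y_1)\delta_{y_1}(y_2)$), $\varepsilon(P_gh)=\delta_{g,e}$, $S(P_gh)=P_{h^{-1}\cdot g^{-1}}h^{-1}$. The carrier space of $\Pi^A_1$ is $\{\phi:H_{el}\to\mathbb{C}\mid \phi(xn)=\phi(x)\ \forall n\in N_A\}$, with action $(\Pi^A_1(f)\phi)(x)=\sum_{z\in H_{el}}f(x\cdot g_A,z)\phi(z^{-1}x)$; the basis vector $|g\rangle$ ($g\in A$) is the indicator function of $\{x\in H_{el}:x\cdot g_A=g\}$. $F(H_m/K)$ denotes functions on $H_m$ constant on left cosets $gK$. *)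

From mathcomp Require Import all_boot all_order all_algebra all_fingroup all_field.
Set Implicit Arguments. Unset Strict Implicit. Unset Printing Implicit Defensive.
Import GRing.Theory Num.Theory.
Local Open Scope ring_scope.

Section ModifiedQD.
Variables (gM gE : finGroupType).
Variable act : gE -> gM -> gM.

(* Elements of the modified quantum double A = F(H_m) (x) C H_el, written
   as functions on H_m x H_el:  P_g h <-> delta_g (x) delta_h. *)
Definition qd_elt := gM -> gE -> algC.

Definition qd_Delta (f : qd_elt) (x1 : gM) (y1 : gE) (x2 : gM) (y2 : gE) : algC :=
  f (x1 * x2)%g y1 * (y1 == y2)%:R.

Variable gA : gM.

Definition N_A : {set gE} := [set h | act h gA == gA].

Definition carrier_Pi1 (phi : gE -> algC) : Prop :=
  forall x n, n \in N_A -> phi (x * n)%g = phi x.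

Definition Pi1 (f : qd_elt) (phi : gE -> algC) : gE -> algC :=
  fun x => \sum_(z : gE) f (act x gA) z * phi (z^-1 * x)%g.

Definition ket (g : gM) : gE -> algC := fun x => (act x gA == g)%:R.

(* Elements of A (x) V are functions (x1,y1,x) |-> value.
   (id (x) Pi^A_1) Delta(f) applied to (1 (x) phi). *)
Definition idPi1_Delta (f : qd_elt) (phi : gE -> algC) : gM -> gE -> gE -> algC :=
  fun x1 y1 x => Pi1 (qd_Delta f x1 y1) phi x.

Definition tens (f : qd_elt) (phi : gE -> algC) : gM -> gE -> gE -> algC :=
  fun x1 y1 x => f x1 y1 * phi x.

Variable E : {set gM}.

Definition phi_r : gE -> algC := fun x => \sum_(g in E) ket g x.

Definition in_Tr (f : qd_elt) : Prop :=
  forall x1 y1 x, idPi1_Delta f phi_r x1 y1 x = tens f phi_r x1 y1 x.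

Definition V_E : {set gE} := [set x | act x gA \in E].

Definition M_E : {set gE} := [set m | [set (m * x)%g | x in V_E] == V_E].

End ModifiedQD.

From mathcomp Require Import all_boot all_order all_algebra all_fingroup all_field.
Set Implicit Arguments. Unset Strict Implicit. Unset Printing Implicit Defensive.
Import GRing.Theory Num.Theory.
Local Open Scope ring_scope.

(* Since |phi_r> is the indicator of V_E, the defining equation of T_r reads
   f(x1 (x . g_A), y1) 1_{V_E}(y1^-1 x) = f(x1, y1) 1_{V_E}(x).
   If y1 is not in M_E, some x in V_E has y1^-1 x outside V_E, which forces
   f(., y1) = 0.  If y1 is in M_E the two indicators coincide, and the equation
   says that f(., y1) is right-invariant under every x . g_A in E, hence under
   the group generated by E. *)

Lemma rinvariant_gen (gT : finGroupType) (T : Type) (f : gT -> T) (S : {set gT}) :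
  (forall x s, s \in S -> f (x * s)%g = f x) ->
  forall x k, k \in <<S>>%g -> f (x * k)%g = f x.
Proof.
move=> fS x k /gen_prodgP[n [s sS ->]].
elim: n s sS x => [|n IHn] s sS x; first by rewrite big_ord0 mulg1.
by rewrite big_ord_recr /= mulgA fS // IHn // => i; apply: sS.
Qed.

Section Condensate.

Variables (gM gE : finGroupType) (act : gE -> gM -> gM) (gA : gM) (E : {set gM}).

Local Notation V := (V_E act gA E).
Local Notation M := (M_E act gA E).

Lemma phi_rE x : phi_r act gA E x = (x \in V)%:R.
Proof.
rewrite /phi_r /ket inE; have [xE | xNE] := boolP (act x gA \in E).
  rewrite (bigD1 (act x gA)) //= eqxx big1 ?addr0 // => g /andP[_ /negbTE].
  by rewrite eq_sym => ->.
by rewrite big1 // => g Eg; case: eqP => // xg; rewrite xg Eg in xNE.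
Qed.

Lemma idPi1_Delta_phi_rE f x1 y1 x :
  idPi1_Delta act gA f (phi_r act gA E) x1 y1 x =
  f (x1 * act x gA)%g y1 * ((y1^-1 * x)%g \in V)%:R.
Proof.
rewrite /idPi1_Delta /Pi1 /qd_Delta (bigD1 y1) //= eqxx mulr1 phi_rE.
by rewrite big1 ?addr0 // => z /negbTE; rewrite eq_sym => ->; rewrite mulr0 mul0r.
Qed.

Lemma in_TrE f :
  in_Tr act gA E f <-> forall x1 y1 x,
    f (x1 * act x gA)%g y1 * ((y1^-1 * x)%g \in V)%:R = f x1 y1 * (x \in V)%:R.
Proof.
rewrite /in_Tr /tens.
by split=> Tf x1 y1 x; have := Tf x1 y1 x; rewrite idPi1_Delta_phi_rE phi_rE.
Qed.

Lemma M_E_lcosetE y : (y \in M) = (y *: V == V)%g.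
Proof. by rewrite inE -lcosetE. Qed.

Lemma mem_M_E_translate y x : y \in M -> ((y^-1 * x)%g \in V) = (x \in V).
Proof. by rewrite M_E_lcosetE => /eqP yV; rewrite -mem_lcoset yV. Qed.

Lemma notin_M_E_witness y :
  y \notin M -> exists2 x, x \in V & (y^-1 * x)%g \notin V.
Proof.
rewrite M_E_lcosetE eq_sym eqEcard card_lcoset leqnn andbT.
by case/subsetPn=> x xV; rewrite mem_lcoset; exists x.
Qed.

Lemma in_Tr_support {f} :
  in_Tr act gA E f -> forall x1 y1, y1 \notin M -> f x1 y1 = 0.
Proof.
move/in_TrE=> Tf x1 y1 /notin_M_E_witness[x xV yxV].
by have := Tf x1 y1 x; rewrite xV (negbTE yxV) mulr0 mulr1.
Qed.

Hypothesis E_orbit : E \subset [set act h gA | h : gE].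

Lemma in_Tr_rinvariant f x1 y1 g :
  in_Tr act gA E f -> g \in E -> f (x1 * g)%g y1 = f x1 y1.
Proof.
move=> Tf Eg; have [yM | yNM] := boolP (y1 \in M); last first.
  by rewrite !(in_Tr_support Tf).
have /imsetP[h _ gh] := subsetP E_orbit g Eg.
have hV : h \in V by rewrite inE -gh.
by have := (in_TrE f).1 Tf x1 y1 h; rewrite mem_M_E_translate // hV !mulr1 -gh.
Qed.

Lemma in_Tr_intro f :
  (forall x1 y1, y1 \notin M -> f x1 y1 = 0) ->
  (forall x1 y1 g, g \in E -> f (x1 * g)%g y1 = f x1 y1) ->
  in_Tr act gA E f.
Proof.
move=> f_supp f_inv; apply/in_TrE => x1 y1 x.
have [yM | yNM] := boolP (y1 \in M); last by rewrite !f_supp // !mul0r.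
rewrite mem_M_E_translate //; have [xV | _] := boolP (x \in V); last by rewrite !mulr0.
by rewrite f_inv //; rewrite inE in xV.
Qed.

End Condensate.

Theorem mainTheorem7 (gM gE : finGroupType) (act : gE -> gM -> gM)
  (act1 : forall g : gM, act 1%g g = g)
  (actM : forall (h h' : gE) (g : gM), act (h * h')%g g = act h (act h' g))
  (act_morph : forall (h : gE) (g g' : gM), act h (g * g')%g = (act h g * act h g')%g)
  (gA : gM) (E : {set gM})
  (hE : E \subset [set act h gA | h : gE]) :
  forall f : qd_elt gM gE,
    in_Tr act gA E f <->
    ((forall (x1 : gM) (y1 : gE), y1 \notin M_E act gA E -> f x1 y1 = 0) /\
     (forall (x1 : gM) (y1 : gE) (k : gM), k \in <<E>>%g -> f (x1 * k)%g y1 = f x1 y1)).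
Proof.
move=> f; split.
  move=> Tf; split=> [|x1 y1]; first exact: in_Tr_support.
  exact: (rinvariant_gen (fun x _ => in_Tr_rinvariant hE x y1 Tf)).
case=> f_supp f_inv; apply: in_Tr_intro => // x1 y1 g Eg.
by apply: f_inv; apply: mem_gen.
Qed.
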